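(* Let $E$ be a Banach lattice and let $\mathrm{r\text{-}l\text{-}Lwc}(E)$ denote the set of r-l-Lwc operators $E\to E$. (i) $\mathrm{r\text{-}l\text{-}Lwc}(E)$ is a subalgebra of the algebra $\mathrm{L}_r(E)$ of regular operators on $E$; moreover, $\mathrm{r\text{-}l\text{-}Lwc}(E)=\mathrm{L}_r(E)$ if and only if the identity $I_E$ is limitedly L-weakly compact. (ii) If $E$ is Dedekind complete, then $\mathrm{r\text{-}l\text{-}Lwc}(E)$ is a closed order ideal of the Banach lattice $(\mathrm{L}_r(E),\|\cdot\|_r)$, where $\|T\|_r:=\|\,|T|\,\|$ is the regular norm.
   Context: All vector spaces are real and operators are linear and bounded; $\mathrm{L}_r(E)$ is the space of regular operators on $E$ (differences of positive operators). For a subset $A$ of a Banach lattice $F$, $\mathrm{sol}(A)=\bigcup_{a\in A}[-|a|,|a|]$. A subset $A\subseteq F$ is an Lwc-set if every disjoint sequence in $\mathrm{sol}(A)$ is norm-null. A bounded subset $A$ of a Banach space $X$ is limited if every weak$^\ast$-null sequence in $X'$ converges to $0$ uniformly on $A$. An operator $T:X\to F$ is limitedly L-weakly compact if $T$ maps every limited subset of $X$ onto an Lwc-subset of $F$. An operator $T:E\to E$ is an r-l-Lwc operator if $T=T_1-T_2$ where $T_1,T_2$ are positive limitedly L-weakly compact operators. *)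

From HB Require Import structures.
From mathcomp Require Import all_boot all_order all_algebra.
From mathcomp Require Import all_classical all_reals topology normedtype sequences.
Set Implicit Arguments. Unset Strict Implicit. Unset Printing Implicit Defensive.
Import Order.TTheory GRing.Theory Num.Theory.
Import numFieldNormedType.Exports.
Local Open Scope ring_scope.
Local Open Scope classical_set_scope.

(** Completeness is provided by taking E : completeNormedModType R. *)
Record BanachLatticeOn (R : realType) (E : normedModType R) := {
  ble : E -> E -> Prop;
  bjoin : E -> E -> E;
  ble_refl : forall x, ble x x;
  ble_antisym : forall x y, ble x y -> ble y x -> x = y;
  ble_trans : forall x y z, ble x y -> ble y z -> ble x z;
  ble_add : forall x y z, ble x y -> ble (x + z) (y + z);
  ble_scale : forall (a : R) x y, 0 <= a -> ble x y -> ble (a *: x) (a *: y);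
  bjoin_ubl : forall x y, ble x (bjoin x y);
  bjoin_ubr : forall x y, ble y (bjoin x y);
  bjoin_least : forall x y z, ble x z -> ble y z -> ble (bjoin x y) z;
  bnorm_monotone : forall x y,
    ble (bjoin x (- x)) (bjoin y (- y)) -> `|x| <= `|y|
}.

Section BL.
Variables (R : realType) (E : normedModType R) (L : BanachLatticeOn E).

Definition labs (x : E) : E := bjoin L x (- x).
Definition bmeet (x y : E) : E := - bjoin L (- x) (- y).

Definition sol (A : set E) : set E :=
  [set y | exists2 a, A a & ble L (- labs a) y /\ ble L y (labs a)].

Definition disjoint_seq (x : nat -> E) : Prop :=
  forall n m, n <> m -> bmeet (labs (x n)) (labs (x m)) = 0.

Definition Lwc_set (A : set E) : Prop :=
  forall x : nat -> E, (forall n, sol A (x n)) -> disjoint_seq x ->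
    (fun n => `|x n|) @ \oo --> (0 : R).

Definition lin_map (V W : normedModType R) (T : V -> W) : Prop :=
  (forall x y, T (x + y) = T x + T y) /\ (forall (a : R) x, T (a *: x) = a *: T x).
Definition bounded_op (V W : normedModType R) (T : V -> W) : Prop :=
  lin_map T /\ exists C : R, forall x, `|T x| <= C * `|x|.

Definition dual_elt (f : E -> R^o) : Prop := bounded_op f.

Definition weakstar_null (f : nat -> E -> R^o) : Prop :=
  (forall n, dual_elt (f n)) /\ forall x, (fun n => f n x) @ \oo --> (0 : R).

Definition limited_set (A : set E) : Prop :=
  (exists C : R, forall a, A a -> `|a| <= C) /\
  forall f : nat -> E -> R^o, weakstar_null f ->
    forall eps : R, 0 < eps -> exists N : nat, forall n, (N <= n)%N ->
      forall a, A a -> `|f n a| <= eps.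

Definition positive_op (T : E -> E) : Prop :=
  forall x, ble L 0 x -> ble L 0 (T x).

Definition limitedly_Lwc (T : E -> E) : Prop :=
  forall A, limited_set A -> Lwc_set (T @` A).

Definition regular_op (T : E -> E) : Prop :=
  exists T1 T2 : E -> E, [/\ bounded_op T1, bounded_op T2, positive_op T1,
    positive_op T2 & T = (fun x => T1 x - T2 x)].

Definition rlLwc (T : E -> E) : Prop :=
  exists T1 T2 : E -> E, [/\ bounded_op T1 /\ bounded_op T2,
    positive_op T1 /\ positive_op T2,
    limitedly_Lwc T1 /\ limitedly_Lwc T2 & T = (fun x => T1 x - T2 x)].

Definition dedekind_complete : Prop :=
  forall A : set E, A !=set0 -> (exists u, forall a, A a -> ble L a u) ->
    exists s, (forall a, A a -> ble L a s) /\
              (forall u, (forall a, A a -> ble L a u) -> ble L s u).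

Definition op_le (S T : E -> E) : Prop := positive_op (fun x => T x - S x).

Definition is_op_modulus (T M : E -> E) : Prop :=
  [/\ regular_op M, op_le T M, op_le (fun x => - T x) M &
      forall U, regular_op U -> op_le T U -> op_le (fun x => - T x) U -> op_le M U].

Definition op_norm (T : E -> E) : R := sup [set `|T x| | x in [set x : E | `|x| <= 1]].

End BL.

(* Write E^a for the set of vectors whose singleton is an Lwc-set; it is a solid,
   norm-closed linear subspace of E.  A bounded operator T is limitedly L-weakly
   compact iff T maps E into E^a.  Singletons are limited, which gives one direction.
   Conversely, let (x_n) be a disjoint sequence in sol(T A), with |x_n| <= |T a_n| for
   some a_n in the limited set A.  Hahn-Banach applied to the sublinear functional
   rho_n(y) = sup_r ||(|y| /\ r |x_n|)|| gives functionals f_n with |f_n| <= rho_n and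
   ||x_n|| <= f_n(T a_n).  For z in E^a the truncations |z| /\ r_n |x_n| are disjoint
   in sol{z}, so rho_n(z) -> 0; hence the f_n o T are weak*-null, and the limitedness
   of A forces ||x_n|| -> 0.
   Therefore the r-l-Lwc operators are the differences of positive operators with
   values in E^a, and (i) follows because E^a is a linear subspace.  For (ii), an
   operator whose modulus is dominated by that of an r-l-Lwc operator takes values in
   E^a by solidity; a norm limit T of r-l-Lwc operators takes values in E^a by
   closedness, and so does its Riesz-Kantorovich positive part T^+, so that
   T = T^+ - (T^+ - T) is r-l-Lwc. *)

From mathcomp Require Import all_boot all_order all_algebra.
From mathcomp Require Import all_classical all_reals topology normedtype sequences.
From mathcomp Require Import lra.
Import Order.TTheory GRing.Theory Num.Theory.
Import numFieldNormedType.Exports.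
Set Implicit Arguments. Unset Strict Implicit. Unset Printing Implicit Defensive.
Local Open Scope ring_scope.
Local Open Scope classical_set_scope.

Section VectorLattice.
Variables (R : realType) (E : normedModType R) (L : BanachLatticeOn E).
Local Notation "x ≤ y" := (ble L x y) (at level 70, no associativity).
Implicit Types x y z u v w : E.

Lemma ble_add2r x y z : x + z ≤ y + z <-> x ≤ y.
Proof. by split=> [/(ble_add (- z))|/(ble_add z)//]; rewrite !addrK. Qed.

Lemma ble_add2l x y z : z + x ≤ z + y <-> x ≤ y.
Proof. by rewrite ![z + _]addrC; exact: ble_add2r. Qed.

Lemma bleD x y u v : x ≤ y -> u ≤ v -> x + u ≤ y + v.
Proof.
move=> /(ble_add u) xy /(ble_add2l _ _ y) uv; exact: ble_trans xy uv.
Qed.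

Lemma ble_subr_addr x y z : x ≤ z - y <-> x + y ≤ z.
Proof. by rewrite -(ble_add2r _ _ y) subrK. Qed.

Lemma bsubr_ge0 x y : 0 ≤ y - x <-> x ≤ y.
Proof. by rewrite ble_subr_addr add0r. Qed.

Lemma bleN2 x y : - x ≤ - y <-> y ≤ x.
Proof. by rewrite -bsubr_ge0 opprK addrC bsubr_ge0. Qed.

Lemma baddr_ge0 x y : 0 ≤ x -> 0 ≤ y -> 0 ≤ x + y.
Proof. by move=> x0 y0; have := bleD x0 y0; rewrite addr0. Qed.

Lemma bscaler_ge0 (a : R) x : 0 <= a -> 0 ≤ x -> 0 ≤ a *: x.
Proof. by move=> a0 x0; have := ble_scale a0 x0; rewrite scaler0. Qed.

Lemma bhalf_ge0 x : 0 ≤ x + x -> 0 ≤ x.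
Proof.
move=> x2; have -> : x = 2^-1 *: (x + x).
  by rewrite -mulr2n -(scaler_nat 2 x) scalerA mulVf ?scale1r // pnatr_eq0.
by apply: bscaler_ge0; rewrite ?invr_ge0.
Qed.

Lemma ble_half x y : x + x ≤ y + y -> x ≤ y.
Proof. by move/bsubr_ge0; rewrite opprD addrACA => /bhalf_ge0/bsubr_ge0. Qed.

Lemma bjoinC x y : bjoin L x y = bjoin L y x.
Proof.
by apply: ble_antisym; apply: bjoin_least;
  [exact: bjoin_ubr|exact: bjoin_ubl|exact: bjoin_ubr|exact: bjoin_ubl].
Qed.

Lemma bjoin_l x y : y ≤ x -> bjoin L x y = x.
Proof.
move=> yx; apply: ble_antisym (bjoin_ubl L x y).
exact: bjoin_least (ble_refl L x) yx.
Qed.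

Lemma bjoinDr x y z : bjoin L x y + z = bjoin L (x + z) (y + z).
Proof.
apply: ble_antisym; last first.
  by apply: bjoin_least; apply/ble_add2r; [exact: bjoin_ubl|exact: bjoin_ubr].
rewrite -ble_subr_addr; apply: bjoin_least; rewrite ble_subr_addr;
  [exact: bjoin_ubl|exact: bjoin_ubr].
Qed.

Lemma bjoinZ (t : R) x y : 0 < t -> bjoin L (t *: x) (t *: y) = t *: bjoin L x y.
Proof.
move=> t0; have tN0 : t != 0 by rewrite gt_eqF.
have scaleK z : t *: (t^-1 *: z) = z by rewrite scalerA mulfV ?scale1r.
have scaleVK z : t^-1 *: (t *: z) = z by rewrite scalerA mulVf ?scale1r.
apply: ble_antisym.
  by apply: bjoin_least; apply: ble_scale (ltW t0) _;
    [exact: bjoin_ubl|exact: bjoin_ubr].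
rewrite -[bjoin L (t *: x) _]scaleK; apply: ble_scale (ltW t0) _.
have ti : 0 <= t^-1 by rewrite invr_ge0 ltW.
apply: bjoin_least.
  by rewrite -[x in x ≤ _]scaleVK; apply: ble_scale ti (bjoin_ubl L _ _).
by rewrite -[y in y ≤ _]scaleVK; apply: ble_scale ti (bjoin_ubr L _ _).
Qed.

Lemma bmeet_lbl x y : bmeet L x y ≤ x.
Proof. by rewrite /bmeet -[x in _ ≤ x]opprK bleN2; exact: bjoin_ubl. Qed.

Lemma bmeet_lbr x y : bmeet L x y ≤ y.
Proof. by rewrite /bmeet -[y in _ ≤ y]opprK bleN2; exact: bjoin_ubr. Qed.

Lemma bmeet_greatest x y z : z ≤ x -> z ≤ y -> z ≤ bmeet L x y.
Proof.
by move=> zx zy; rewrite /bmeet -[z]opprK bleN2; apply: bjoin_least; rewrite bleN2.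
Qed.

Lemma bmeet_ge0 x y : 0 ≤ x -> 0 ≤ y -> 0 ≤ bmeet L x y.
Proof. exact: bmeet_greatest. Qed.

Lemma bmeetC x y : bmeet L x y = bmeet L y x.
Proof. by rewrite /bmeet bjoinC. Qed.

Lemma bmeet_le2 x y u v : x ≤ u -> y ≤ v -> bmeet L x y ≤ bmeet L u v.
Proof.
move=> xu yv; apply: bmeet_greatest.
  exact: ble_trans (bmeet_lbl _ _) xu.
exact: ble_trans (bmeet_lbr _ _) yv.
Qed.

Lemma bmeet_l x y : x ≤ y -> bmeet L x y = x.
Proof.
move=> xy; apply: ble_antisym; first exact: bmeet_lbl.
exact: bmeet_greatest (ble_refl L x) xy.
Qed.

Lemma bmeetDr x y z : bmeet L x y + z = bmeet L (x + z) (y + z).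
Proof. by rewrite /bmeet -[z in LHS]opprK -opprD bjoinDr !opprD. Qed.

Lemma bmeetDl x y z : z + bmeet L x y = bmeet L (z + x) (z + y).
Proof. by rewrite addrC bmeetDr ![z + _]addrC. Qed.

Lemma bmeetZ (t : R) x y : 0 < t -> bmeet L (t *: x) (t *: y) = t *: bmeet L x y.
Proof. by move=> t0; rewrite /bmeet -!scalerN bjoinZ // scalerN. Qed.

Lemma labs_ubl x : x ≤ labs L x. Proof. exact: bjoin_ubl. Qed.

Lemma labs_ubr x : - x ≤ labs L x. Proof. exact: bjoin_ubr. Qed.

Lemma labs_le x c : labs L x ≤ c <-> - c ≤ x /\ x ≤ c.
Proof.
split=> [xc|[cx xc]]; last by apply: bjoin_least; rewrite // -bleN2 opprK.
split; last exact: ble_trans (labs_ubl x) xc.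
by rewrite -bleN2 opprK; exact: ble_trans (labs_ubr x) xc.
Qed.

Lemma labs_ge0 x : 0 ≤ labs L x.
Proof. by apply: bhalf_ge0; have := bleD (labs_ubl x) (labs_ubr x); rewrite subrr. Qed.

Lemma labsN x : labs L (- x) = labs L x.
Proof. by rewrite /labs opprK bjoinC. Qed.

Lemma bge0_labs u : 0 ≤ u -> labs L u = u.
Proof.
move=> u0; apply: bjoin_l; apply: ble_trans (_ : 0 ≤ u) => //.
by rewrite -oppr0 bleN2.
Qed.

Lemma labs0 : labs L 0 = 0. Proof. exact/bge0_labs/ble_refl. Qed.

Lemma labs_id x : labs L (labs L x) = labs L x.
Proof. exact/bge0_labs/labs_ge0. Qed.

Lemma labsD x y : labs L (x + y) ≤ labs L x + labs L y.
Proof.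
apply/labs_le; split; last by apply: bleD; exact: labs_ubl.
by rewrite -bleN2 opprK opprD; apply: bleD; exact: labs_ubr.
Qed.

Lemma labs_addr_ge0 x : 0 ≤ labs L x + x.
Proof. by have := labs_ubr x; rewrite -bsubr_ge0 opprK. Qed.

Lemma labs_subr_ge0 x : 0 ≤ labs L x - x.
Proof. by rewrite bsubr_ge0; exact: labs_ubl. Qed.

Lemma labsZ (t : R) x : labs L (t *: x) = `|t| *: labs L x.
Proof.
have [t0|t0] := leP 0 t.
  rewrite ger0_norm //; have [->|tN0] := eqVneq t 0; first by rewrite !scale0r labs0.
  by rewrite /labs -scalerN bjoinZ // lt0r tN0 t0.
by rewrite ltr0_norm // -labsN -scaleNr /labs -scalerN bjoinZ // oppr_gt0.
Qed.

Lemma bnorm_labs_le x y : labs L x ≤ labs L y -> `|x| <= `|y|.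
Proof. exact: bnorm_monotone. Qed.

Lemma bnorm_labs x : `|labs L x| = `|x|.
Proof.
by apply/eqP; rewrite eq_le; apply/andP; split; apply: bnorm_labs_le;
  rewrite labs_id; exact: ble_refl.
Qed.

Lemma bnorm_le u v : 0 ≤ u -> u ≤ v -> `|u| <= `|v|.
Proof.
move=> u0 uv; apply: bnorm_labs_le.
by rewrite !bge0_labs //; exact: ble_trans uv.
Qed.

Lemma bnorm_le_labs x c : labs L x ≤ c -> `|x| <= `|c|.
Proof. by rewrite -bnorm_labs; apply: bnorm_le; exact: labs_ge0. Qed.

Lemma riesz_decomposition u v w : 0 ≤ u -> 0 ≤ v -> 0 ≤ w -> u ≤ v + w ->
  [/\ 0 ≤ u - bmeet L u v, u - bmeet L u v ≤ u & u - bmeet L u v ≤ w].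
Proof.
move=> u0 v0 w0 uvw; split.
- by rewrite bsubr_ge0; exact: bmeet_lbl.
- by rewrite -bsubr_ge0 opprB addrCA subrr addr0; exact: bmeet_ge0.
- rewrite /bmeet opprK addrC bjoinDr addNr; apply: bjoin_least => //.
  by rewrite -(ble_add2l _ _ v) addrA subrr add0r.
Qed.

Lemma bmeetDl_le x y w : 0 ≤ x -> 0 ≤ y -> 0 ≤ w ->
  bmeet L (x + y) w ≤ bmeet L x w + bmeet L y w.
Proof.
move=> x0 y0 w0.
have le1 : bmeet L (x + y) w ≤ bmeet L (x + bmeet L y w) w.
  apply: bmeet_greatest (bmeet_lbr _ _).
  rewrite bmeetDl; apply: bmeet_greatest (bmeet_lbl _ _) _.
  apply: ble_trans (bmeet_lbr _ _) _.
  by rewrite -[w in w ≤ _]add0r; apply/ble_add2r.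
apply: ble_trans le1 _; rewrite bmeetDr; apply: bmeet_le2; first exact: ble_refl.
by rewrite -[w in w ≤ _]addr0; apply/ble_add2l; exact: bmeet_ge0.
Qed.

Lemma bmeet_disjointZ x y (r s : R) : 0 ≤ x -> 0 ≤ y -> 0 <= r -> 0 <= s ->
  bmeet L x y = 0 -> bmeet L (r *: x) (s *: y) = 0.
Proof.
move=> x0 y0 r0 s0 xy0; apply: ble_antisym; last by apply: bmeet_ge0; apply: bscaler_ge0.
have [rs0|rsN0] := eqVneq (r + s) 0.
  have -> : r = 0 by move/eqP: rs0; rewrite paddr_eq0 // => /andP[/eqP].
  by rewrite scale0r; exact: bmeet_lbl.
have rs_gt0 : 0 < r + s by rewrite lt0r rsN0 addr_ge0.
rewrite -(scaler0 _ (r + s)) -xy0 -bmeetZ //; apply: bmeet_le2.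
  by rewrite -bsubr_ge0 -scalerBl addrAC subrr add0r; exact: bscaler_ge0.
by rewrite -bsubr_ge0 -scalerBl addrK; exact: bscaler_ge0.
Qed.

End VectorLattice.

Lemma cvgn0P (R : realType) (u : nat -> R) : u @ \oo --> (0 : R) <->
  forall eps, 0 < eps -> exists N, forall n, (N <= n)%N -> `|u n| <= eps.
Proof.
split=> [/cvgr0Pnorm_le u0 eps eps0|u0].
  by have [N _ uN] := u0 eps eps0; exists N => n /uN.
apply/cvgr0Pnorm_le => eps eps0; have [N uN] := u0 eps eps0.
by exists N => // n /uN.
Qed.

Section LwcElements.
Variables (R : realType) (E : normedModType R) (L : BanachLatticeOn E).
Local Notation "x ≤ y" := (ble L x y) (at level 70, no associativity).
Implicit Types x y z u v w : E.

Definition Lwc_elt z := Lwc_set L [set z].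

Lemma sol_set1 z y : sol L [set z] y <-> labs L y ≤ labs L z.
Proof.
split=> [[_ -> /labs_le//]|yz].
by exists z => //; apply/labs_le.
Qed.

Lemma disjoint_seq_le (x s : nat -> E) : disjoint_seq L x ->
  (forall n, 0 ≤ s n /\ s n ≤ labs L (x n)) -> disjoint_seq L s.
Proof.
move=> xdisj sx n m nm; have [s0 sxn] := sx n; have [s0' sxm] := sx m.
rewrite !bge0_labs //; apply: ble_antisym; last exact: bmeet_ge0.
by rewrite -(xdisj n m nm); apply: bmeet_le2.
Qed.

Lemma disjoint_seq_split (x : nat -> E) a b : disjoint_seq L x ->
  (forall n, labs L (x n) ≤ labs L a + labs L b) ->
  exists s t : nat -> E, [/\ (forall n, sol L [set a] (s n)), disjoint_seq L s,
     (forall n, 0 ≤ t n /\ t n ≤ labs L b), disjoint_seq L t &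
     forall n, `|x n| <= `|s n| + `|t n|].
Proof.
move=> xdisj xab; pose s n := bmeet L (labs L (x n)) (labs L a).
have dec n := riesz_decomposition (labs_ge0 L (x n)) (labs_ge0 L a) (labs_ge0 L b) (xab n).
have sx n : 0 ≤ s n /\ s n ≤ labs L (x n).
  by split; [apply: bmeet_ge0; exact: labs_ge0|exact: bmeet_lbl].
exists s, (fun n => labs L (x n) - s n); split.
- move=> n; apply/sol_set1; rewrite bge0_labs; [exact: bmeet_lbr|by case: (sx n)].
- exact: disjoint_seq_le sx.
- by move=> n; case: (dec n).
- by apply: (disjoint_seq_le xdisj) => n; case: (dec n).
- by move=> n; rewrite -(bnorm_labs L (x n)) -{1}(subrK (s n) (labs L (x n))) addrC ler_normD.
Qed.

Lemma Lwc_elt0 : Lwc_elt 0.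
Proof.
move=> x x0 _; apply/cvgn0P => eps eps0; exists 0%N => n _.
have /sol_set1 := x0 n; rewrite labs0 normr_id => /bnorm_le_labs.
by rewrite normr0 => /le_trans; apply; exact: ltW.
Qed.

Lemma Lwc_elt_solid y z : labs L y ≤ labs L z -> Lwc_elt z -> Lwc_elt y.
Proof.
move=> yz zLwc x xy; apply: zLwc => n.
by apply/sol_set1; apply: ble_trans yz; apply/sol_set1.
Qed.

Lemma Lwc_eltN u : Lwc_elt u -> Lwc_elt (- u).
Proof. by apply: Lwc_elt_solid; rewrite labsN; exact: ble_refl. Qed.

Lemma Lwc_eltD u v : Lwc_elt u -> Lwc_elt v -> Lwc_elt (u + v).
Proof.
move=> uLwc vLwc x xuv xdisj; apply/cvgn0P => eps eps0.
have eps2 : 0 < eps / 2 by rewrite divr_gt0.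
have xle n : labs L (x n) ≤ labs L u + labs L v.
  by apply: ble_trans (labsD _ _ _); apply/sol_set1.
have [s [t [su sdisj tle tdisj xst]]] := disjoint_seq_split xdisj xle.
have tsol n : sol L [set v] (t n).
  by have [t0 tv] := tle n; apply/sol_set1; rewrite bge0_labs.
have /cvgn0P/(_ _ eps2) [N1 sN1] := uLwc s su sdisj.
have /cvgn0P/(_ _ eps2) [N2 tN2] := vLwc t tsol tdisj.
exists (maxn N1 N2) => n; rewrite geq_max => /andP[n1 n2].
rewrite normr_id (le_trans (xst n)) // [eps]splitr lerD //.
  by have := sN1 n n1; rewrite normr_id.
by have := tN2 n n2; rewrite normr_id.
Qed.

Lemma Lwc_eltB u v : Lwc_elt u -> Lwc_elt v -> Lwc_elt (u - v).
Proof. by move=> uLwc /Lwc_eltN; exact: Lwc_eltD. Qed.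

Lemma Lwc_eltMn u n : Lwc_elt u -> Lwc_elt (u *+ n).
Proof.
move=> uLwc; elim: n => [|n IHn]; first exact: Lwc_elt0.
by rewrite mulrS; exact: Lwc_eltD.
Qed.

Lemma Lwc_eltZ (c : R) u : Lwc_elt u -> Lwc_elt (c *: u).
Proof.
move=> /(Lwc_eltMn (n := Num.Def.archi_bound `|c|)); apply: Lwc_elt_solid.
rewrite -scaler_nat !labsZ -bsubr_ge0 -scalerBl; apply: bscaler_ge0 (labs_ge0 L u).
by rewrite normr_nat subr_ge0 ltW // archi_boundP.
Qed.

Lemma Lwc_elt_approx w : (forall d : R, 0 < d -> exists a m, [/\ Lwc_elt a,
   labs L w ≤ labs L a + labs L m & `|m| <= d]) -> Lwc_elt w.
Proof.
move=> approx x xw xdisj; apply/cvgn0P => eps eps0.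
have eps2 : 0 < eps / 2 by rewrite divr_gt0.
have [a [m [aLwc wam mle]]] := approx _ eps2.
have xle n : labs L (x n) ≤ labs L a + labs L m.
  by apply: ble_trans wam; apply/sol_set1.
have [s [t [sa sdisj tle _ xst]]] := disjoint_seq_split xdisj xle.
have /cvgn0P/(_ _ eps2) [N sN] := aLwc s sa sdisj.
exists N => n nN; rewrite normr_id (le_trans (xst n)) // [eps]splitr lerD //.
  by have := sN n nN; rewrite normr_id.
have [t0 tm] := tle n; apply: le_trans mle.
by rewrite -(bnorm_labs L m); exact: bnorm_le t0 tm.
Qed.

End LwcElements.

Section HahnBanach.
Variables (R : realType) (V : lmodType R) (p : V -> R).
Hypothesis pD : forall x y, p (x + y) <= p x + p y.
Hypothesis pZ : forall (t : R) x, 0 <= t -> p (t *: x) = t * p x.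

Lemma sublinear0 : p 0 = 0.
Proof. by rewrite -(scale0r (0 : V)) pZ // mul0r. Qed.

Lemma sublinearZ_le (t : R) x : t * p x <= p (t *: x).
Proof.
have [t0|t0] := leP 0 t; first by rewrite pZ.
have := pD (t *: x) ((- t) *: x).
rewrite -scalerDl subrr scale0r sublinear0 (@pZ (- t)); last by rewrite oppr_ge0 ltW.
by rewrite mulNr subr_ge0.
Qed.

Definition dominated_graph (G : set (V * R)) :=
  [/\ forall x r s, G (x, r) -> G (x, s) -> r = s,
      forall x r y s, G (x, r) -> G (y, s) -> G (x + y, r + s),
      forall a x r, G (x, r) -> G (a *: x, a * r) &
      forall x r, G (x, r) -> r <= p x].

Lemma dominated_graph_pairwise (G : set (V * R)) :
  (forall z1 z2, G z1 -> G z2 -> exists2 S, dominated_graph S & [/\ S z1, S z2 & S `<=` G]) ->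
  dominated_graph G.
Proof.
move=> pairwise; split.
- move=> x r s G1 G2; have [S [Sfun _ _ _] [S1 S2 _]] := pairwise _ _ G1 G2.
  exact: Sfun S1 S2.
- move=> x r y s G1 G2; have [S [_ SD _ _] [S1 S2 SG]] := pairwise _ _ G1 G2.
  exact/SG/SD.
- move=> a x r G1; have [S [_ _ SZ _] [S1 _ SG]] := pairwise _ _ G1 G1.
  exact/SG/SZ.
- move=> x r G1; have [S [_ _ _ Sp] [S1 _ _]] := pairwise _ _ G1 G1.
  exact: Sp.
Qed.

Variable v : V.

Definition span_graph : set (V * R) := [set (t *: v, t * p v) | t in setT].

Lemma dominated_span_graph : dominated_graph span_graph.
Proof.
split.
- move=> x r s [t _ [<- <-]] [t' _ [e <-]].
  have [->|vN0] := eqVneq v 0; first by rewrite sublinear0 !mulr0.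
  have : (t - t') *: v = 0 by rewrite scalerBl e subrr.
  by move/eqP; rewrite scaler_eq0 (negbTE vN0) orbF subr_eq0 => /eqP ->.
- move=> x r y s [t _ [<- <-]] [t' _ [<- <-]]; exists (t + t') => //.
  by rewrite scalerDl mulrDl.
- move=> a x r [t _ [<- <-]]; exists (a * t) => //.
  by rewrite scalerA mulrA.
- by move=> x r [t _ [<- <-]]; exact: sublinearZ_le.
Qed.

Definition admissible_graph (G : set (V * R)) := dominated_graph (G `|` span_graph).

Lemma admissible_graph_chain (F : set (set (V * R))) :
  F `<=` admissible_graph -> total_on F subset -> admissible_graph (\bigcup_(X in F) X).
Proof.
move=> Fadm Ftot; apply: dominated_graph_pairwise => z1 z2 z1F z2F.
have sub X : F X -> X `|` span_graph `<=` (\bigcup_(X in F) X) `|` span_graph.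
  by move=> FX z [Xz|Gz]; [left; exists X|right].
case: z1F => [[X1 FX1 z1X]|z1G]; case: z2F => [[X2 FX2 z2X]|z2G].
- have [X12|X21] := Ftot _ _ FX1 FX2.
    by exists (X2 `|` span_graph); [exact: Fadm|split; [left; exact: X12|left|exact: sub]].
  by exists (X1 `|` span_graph); [exact: Fadm|split; [left|left; exact: X21|exact: sub]].
- by exists (X1 `|` span_graph); [exact: Fadm|split; [left|right|exact: sub]].
- by exists (X2 `|` span_graph); [exact: Fadm|split; [right|left|exact: sub]].
- by exists span_graph; [exact: dominated_span_graph|split=> // z; right].
Qed.

Section OneStepExtension.
Variable G : set (V * R).
Hypotheses (Gdom : dominated_graph G) (spanG : span_graph `<=` G).
Variable x0 : V.
Hypothesis x0_notin : forall r, ~ G (x0, r).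

Let G00 : G (0, 0).
Proof. by apply: spanG; exists 0 => //; rewrite scale0r mul0r. Qed.

Let lower_values := [set y | exists d r, G (d, r) /\ y = r - p (d - x0)].

Let lower_values_ub d' r' : G (d', r') -> ubound lower_values (p (d' + x0) - r').
Proof.
move=> Gd' _ [d [r [Gd ->]]]; case: Gdom => _ GD _ Gp.
have := Gp _ _ (GD _ _ _ _ Gd Gd'); rewrite lerBrDr addrAC lerBlDr.
move/le_trans; apply; rewrite [p (d' + x0) + _]addrC.
by have -> : d + d' = (d - x0) + (d' + x0) by rewrite addrACA addNr addr0.
Qed.

Let has_sup_lower_values : has_sup lower_values.
Proof.
split; first by exists (0 - p (0 - x0)), 0, 0; split; first exact: G00.
by exists (p (0 + x0) - 0); exact: lower_values_ub.
Qed.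

(* Any [c] between the lower values and the upper values [p (d + x0) - r] keeps the
   extended graph dominated by [p]. *)
Let c := sup lower_values.

Let c_lb d r : G (d, r) -> r - p (d - x0) <= c.
Proof. by move=> Gd; apply: sup_upper_bound has_sup_lower_values _ _; exists d, r. Qed.

Let c_ub d r : G (d, r) -> c <= p (d + x0) - r.
Proof. by move=> Gd; apply: ge_sup; [case: has_sup_lower_values|exact: lower_values_ub]. Qed.

Definition extend_graph : set (V * R) :=
  [set z | exists d r (t : R), G (d, r) /\ z = (d + t *: x0, r + t * c)].

Lemma extend_graph_sub : G `<=` extend_graph.
Proof. by move=> [x r] Gx; exists x, r, 0; rewrite scale0r mul0r !addr0. Qed.

Lemma extend_graph_x0 : extend_graph (x0, c).
Proof. by exists 0, 0, 1; rewrite add0r scale1r add0r mul1r. Qed.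

Let extend_graph_functional x r s : extend_graph (x, r) -> extend_graph (x, s) -> r = s.
Proof.
case: Gdom => Gfun GD GZ _.
move=> [d [r1 [t [Gd [ex ->]]]]] [d' [r1' [t' [Gd' [ex' ->]]]]].
have tt' : t = t'.
  apply: contrapT => /eqP tt'.
  have e : (t - t') *: x0 = d' - d.
    have e : d + t *: x0 = d' + t' *: x0 by rewrite -ex -ex'.
    by rewrite scalerBl -[t *: x0](addKr d) e addrA addrK addrC.
  have Gdd : G (d' - d, r1' - r1).
    by apply: GD => //; rewrite -scaleN1r -[- r1]mulN1r; exact: GZ.
  apply: (@x0_notin ((t - t')^-1 * (r1' - r1))).
  rewrite (_ : x0 = (t - t')^-1 *: (d' - d)); first exact: GZ.
  by rewrite -e scalerA mulVf ?scale1r // subr_eq0.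
move: ex'; rewrite ex tt' => /addIr dd'; rewrite dd' in Gd.
by rewrite (Gfun _ _ _ Gd Gd').
Qed.

Let extend_graph_le x r : extend_graph (x, r) -> r <= p x.
Proof.
case: Gdom => _ _ GZ Gp; move=> [d [r1 [t [Gd [-> ->]]]]].
have [t0|t0|->] := ltgtP t 0; last by rewrite scale0r mul0r !addr0; exact: Gp Gd.
- have nt0 : 0 < - t by rewrite oppr_gt0.
  have := c_lb (GZ (- t)^-1 _ _ Gd).
  rewrite (_ : (- t)^-1 *: d - x0 = (- t)^-1 *: (d + t *: x0)); last first.
    by rewrite scalerDr scalerA invrN mulNr mulVf ?lt_eqF // scaleN1r.
  rewrite (@pZ (- t)^-1); last by rewrite invr_ge0 ltW.
  rewrite -mulrBr -(ler_pM2l nt0) mulrA mulfV ?oppr_eq0 ?lt_eqF // mul1r.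
  by set P := p _ => ?; nra.
- have := c_ub (GZ t^-1 _ _ Gd).
  rewrite (_ : t^-1 *: d + x0 = t^-1 *: (d + t *: x0)); last first.
    by rewrite scalerDr scalerA mulVf ?gt_eqF // scale1r.
  rewrite (@pZ t^-1); last by rewrite invr_ge0 ltW.
  rewrite -mulrBr -(ler_pM2l t0) mulrA mulfV ?gt_eqF // mul1r.
  by set P := p _ => ?; nra.
Qed.

Lemma dominated_extend_graph : dominated_graph extend_graph.
Proof.
case: Gdom => _ GD GZ _; split.
- exact: extend_graph_functional.
- move=> x r y s [d [r1 [t [Gd [-> ->]]]]] [d' [r1' [t' [Gd' [-> ->]]]]].
  exists (d + d'), (r1 + r1'), (t + t'); split; first exact: GD.
  by rewrite scalerDl mulrDl !addrA [d + _ + d']addrAC [r1 + _ + r1']addrAC.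
- move=> a x r [d [r1 [t [Gd [-> ->]]]]].
  exists (a *: d), (a * r1), (a * t); split; first exact: GZ.
  by rewrite scalerDr mulrDr scalerA mulrA.
- exact: extend_graph_le.
Qed.

End OneStepExtension.

Theorem hahn_banach : exists f : V -> R,
  [/\ forall x y, f (x + y) = f x + f y, forall (a : R) x, f (a *: x) = a * f x,
      forall x, f x <= p x & f v = p v].
Proof.
have [A [Aadm Amax]] := Zorn_bigcup admissible_graph_chain.
pose G := A `|` span_graph.
have Gdom : dominated_graph G by [].
have spanG : span_graph `<=` G by move=> z; right.
have Gtotal x0 : exists r, G (x0, r).
  apply: contrapT => x0_notin.
  have {}x0_notin r : ~ G (x0, r) by move=> ?; apply: x0_notin; exists r.
  have Gext : G `<=` extend_graph G x0 := @extend_graph_sub G x0.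
  apply: (Amax (extend_graph G x0)).
    split=> [z Az|sub]; first by apply: Gext; left.
    by apply: x0_notin; left; apply: sub; exact: extend_graph_x0.
  rewrite /admissible_graph setUidl; first exact: dominated_extend_graph.
  exact: subset_trans spanG Gext.
have [f Gf] := choice Gtotal.
case: Gdom => Gfun GD GZ Gp.
exists f; split.
- by move=> x y; apply: Gfun (Gf (x + y)) (GD _ _ _ _ (Gf x) (Gf y)).
- by move=> a x; apply: Gfun (Gf (a *: x)) (GZ a _ _ (Gf x)).
- by move=> x; apply: Gp (Gf x).
- by apply: Gfun (Gf v) _; apply: spanG; exists 1; rewrite ?scale1r ?mul1r.
Qed.

End HahnBanach.

Lemma bounded_op_ge0 (R : realType) (V W : normedModType R) (T : V -> W) : bounded_op T ->
  exists2 C : R, 0 <= C & forall x, `|T x| <= C * `|x|.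
Proof.
move=> [_ [C TC]]; exists (Num.max C 0) => [|x]; first by rewrite le_max lexx orbT.
by apply: le_trans (TC x) _; apply: ler_wpM2r => //; rewrite le_max lexx.
Qed.

Section BoundedOperators.
Variables (R : realType) (U V W : normedModType R).

Lemma lin_map0 (T : V -> W) : lin_map T -> T 0 = 0.
Proof. by case=> TD _; apply: (addrI (T 0)); rewrite -TD !addr0. Qed.

Lemma lin_mapN (T : V -> W) x : lin_map T -> T (- x) = - T x.
Proof. by case=> _ TZ; rewrite -scaleN1r TZ scaleN1r. Qed.

Lemma lin_mapB (T : V -> W) x y : lin_map T -> T (x - y) = T x - T y.
Proof. by move=> Tlin; rewrite Tlin.1 lin_mapN. Qed.

Lemma bounded_opD (S T : V -> W) : bounded_op S -> bounded_op T ->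
  bounded_op (fun x => S x + T x).
Proof.
move=> Sb Tb; have [C1 _ SC] := bounded_op_ge0 Sb; have [C2 _ TC] := bounded_op_ge0 Tb.
case: Sb => [[SD SZ] _]; case: Tb => [[TD TZ] _]; split.
  by split=> [x y|a x]; [rewrite SD TD addrACA|rewrite SZ TZ scalerDr].
exists (C1 + C2) => x; apply: le_trans (ler_normD _ _) _.
by rewrite mulrDl lerD.
Qed.

Lemma bounded_opZ (a : R) (T : V -> W) : bounded_op T -> bounded_op (fun x => a *: T x).
Proof.
move=> Tb; have [C _ TC] := bounded_op_ge0 Tb; case: Tb => [[TD TZ] _]; split.
  by split=> [x y|b x]; [rewrite TD scalerDr|rewrite TZ !scalerA mulrC].
by exists (`|a| * C) => x; rewrite normrZ -mulrA ler_wpM2l.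
Qed.

Lemma bounded_opB (S T : V -> W) : bounded_op S -> bounded_op T ->
  bounded_op (fun x => S x - T x).
Proof.
move=> Sb /(bounded_opZ (-1)) /(bounded_opD Sb).
by under eq_fun do rewrite scaleN1r.
Qed.

Lemma bounded_op_comp (S : V -> W) (T : U -> V) : bounded_op S -> bounded_op T ->
  bounded_op (S \o T).
Proof.
move=> Sb Tb; have [C1 C1_ge0 SC] := bounded_op_ge0 Sb; have [C2 _ TC] := bounded_op_ge0 Tb.
case: Sb => [[SD SZ] _]; case: Tb => [[TD TZ] _]; split.
  by split=> [x y|a x] /=; [rewrite TD SD|rewrite TZ SZ].
exists (C1 * C2) => x /=; apply: le_trans (SC _) _.
by rewrite -mulrA ler_wpM2l.
Qed.

Lemma bounded_op_id : bounded_op (@id V).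
Proof. by split; [split|exists 1 => x; rewrite mul1r]. Qed.

Lemma bounded_op0 : bounded_op (fun _ : V => (0 : W)).
Proof.
split; first by split=> [x y|a x]; rewrite ?addr0 ?scaler0.
by exists 0 => x; rewrite normr0 mul0r.
Qed.

End BoundedOperators.

Lemma op_norm_le (R : realType) (E : normedModType R) (T : E -> E) x :
  bounded_op T -> `|T x| <= op_norm T * `|x|.
Proof.
move=> Tb; have [C C_ge0 TC] := bounded_op_ge0 Tb; have Tlin := Tb.1.
have Tsup : has_sup [set `|T z| | z in [set z : E | `|z| <= 1]].
  split; first by exists `|T 0|, 0 => //=; rewrite normr0.
  exists C => _ [z z1 <-]; apply: le_trans (TC z) _.
  by rewrite -[leRHS]mulr1 ler_wpM2l.
have [->|xN0] := eqVneq x 0; first by rewrite lin_map0 // !normr0 mulr0.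
have x_gt0 : 0 < `|x| by rewrite normr_gt0.
have : `|T (`|x|^-1 *: x)| <= op_norm T.
  apply: sup_upper_bound Tsup _ _; exists (`|x|^-1 *: x) => //=.
  by rewrite normrZ ger0_norm ?invr_ge0 // mulVf ?normr_eq0.
rewrite Tlin.2 normrZ ger0_norm ?invr_ge0 // -(ler_pM2r x_gt0) mulrAC.
by rewrite mulVf ?mul1r // gt_eqF.
Qed.

Section PositiveOperators.
Variables (R : realType) (E : normedModType R) (L : BanachLatticeOn E).
Local Notation "x ≤ y" := (ble L x y) (at level 70, no associativity).
Implicit Types S T : E -> E.

Lemma positive_opD S T : positive_op L S -> positive_op L T ->
  positive_op L (fun x => S x + T x).
Proof. by move=> Spos Tpos x x0; apply: baddr_ge0; [apply: Spos|apply: Tpos]. Qed.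

Lemma positive_opZ (a : R) T : 0 <= a -> positive_op L T ->
  positive_op L (fun x => a *: T x).
Proof. by move=> a0 Tpos x x0; apply: bscaler_ge0 => //; apply: Tpos. Qed.

Lemma positive_op_comp S T : positive_op L S -> positive_op L T -> positive_op L (S \o T).
Proof. by move=> Spos Tpos x x0; apply/Spos/Tpos. Qed.

Lemma positive_op0 : positive_op L (fun _ => 0).
Proof. by move=> x _; exact: ble_refl. Qed.

Lemma positive_op_le T x y : lin_map T -> positive_op L T -> x ≤ y -> T x ≤ T y.
Proof. by move=> Tlin Tpos xy; rewrite -bsubr_ge0 -lin_mapB //; apply/Tpos/bsubr_ge0. Qed.

Lemma positive_op_labs T x : lin_map T -> positive_op L T ->
  labs L (T x) ≤ T (labs L x).
Proof.
move=> Tlin Tpos; apply/labs_le; split.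
  by rewrite -bsubr_ge0 opprK -Tlin.1 addrC; apply/Tpos/labs_addr_ge0.
by rewrite -bsubr_ge0 -lin_mapB //; apply/Tpos/labs_subr_ge0.
Qed.

End PositiveOperators.

Section TruncationSeminorm.
Variables (R : realType) (E : normedModType R) (L : BanachLatticeOn E).
Local Notation "x ≤ y" := (ble L x y) (at level 70, no associativity).
Implicit Types x y z u v : E.

Definition trunc_seminorm w y :=
  sup [set `|bmeet L (labs L y) (r *: w)| | r in [set r : R | 0 < r]].

Variable w : E.
Hypothesis w_ge0 : 0 ≤ w.

Let trunc_ge0 y (r : R) : 0 < r -> 0 ≤ bmeet L (labs L y) (r *: w).
Proof.
by move=> r0; apply: bmeet_ge0; [exact: labs_ge0|exact: bscaler_ge0 (ltW r0) w_ge0].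
Qed.

Let truncs_neq0 y : [set `|bmeet L (labs L y) (r *: w)| | r in [set r : R | 0 < r]] !=set0.
Proof. by exists `|bmeet L (labs L y) (1 *: w)|; exists 1 => //=; exact: ltr01. Qed.

Let truncs_ub y : ubound [set `|bmeet L (labs L y) (r *: w)| | r in [set r : R | 0 < r]] `|y|.
Proof.
move=> _ [r r0 <-]; rewrite -(bnorm_labs L y).
exact: bnorm_le (trunc_ge0 y r0) (bmeet_lbl L _ _).
Qed.

Lemma trunc_seminorm_le_norm y : trunc_seminorm w y <= `|y|.
Proof. exact: ge_sup (truncs_neq0 y) (@truncs_ub y). Qed.

Lemma has_sup_truncs y :
  has_sup [set `|bmeet L (labs L y) (r *: w)| | r in [set r : R | 0 < r]].
Proof. by split; [exact: truncs_neq0|exists `|y|; exact: (@truncs_ub y)]. Qed.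

Lemma trunc_seminorm_ge y (r : R) : 0 < r ->
  `|bmeet L (labs L y) (r *: w)| <= trunc_seminorm w y.
Proof. by move=> r0; apply: sup_upper_bound (has_sup_truncs y) _ _; exists r. Qed.

Lemma trunc_seminorm_ge0 y : 0 <= trunc_seminorm w y.
Proof. exact: le_trans (normr_ge0 _) (trunc_seminorm_ge y ltr01). Qed.

Lemma trunc_seminormN y : trunc_seminorm w (- y) = trunc_seminorm w y.
Proof. by rewrite /trunc_seminorm labsN. Qed.

Lemma trunc_seminormD y z :
  trunc_seminorm w (y + z) <= trunc_seminorm w y + trunc_seminorm w z.
Proof.
apply: ge_sup (truncs_neq0 _) _ => _ [r r0 <-].
have rw0 : 0 ≤ r *: w by exact: bscaler_ge0 (ltW r0) w_ge0.
have split_trunc : bmeet L (labs L (y + z)) (r *: w)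
    ≤ bmeet L (labs L y) (r *: w) + bmeet L (labs L z) (r *: w).
  apply: ble_trans (bmeetDl_le (labs_ge0 L y) (labs_ge0 L z) rw0).
  by apply: bmeet_le2; [exact: labsD|exact: ble_refl].
apply: le_trans (bnorm_le (trunc_ge0 _ r0) split_trunc) _.
by apply: le_trans (ler_normD _ _) _; apply: lerD; exact: trunc_seminorm_ge.
Qed.

Lemma trunc_seminormZ (t : R) y : 0 <= t ->
  trunc_seminorm w (t *: y) = t * trunc_seminorm w y.
Proof.
move=> t0; have [->|tN0] := eqVneq t 0.
  rewrite mul0r scale0r; apply/eqP; rewrite eq_le trunc_seminorm_ge0 andbT.
  apply: ge_sup (truncs_neq0 _) _ => _ [r r0 <-].
  by rewrite labs0 bmeet_l ?normr0 //; exact: bscaler_ge0 (ltW r0) w_ge0.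
have t_gt0 : 0 < t by rewrite lt0r tN0.
have truncZ y' (r : R) : 0 < r ->
    `|bmeet L (labs L (t *: y')) ((t * r) *: w)| = t * `|bmeet L (labs L y') (r *: w)|.
  by move=> r0; rewrite labsZ ger0_norm // -scalerA bmeetZ // normrZ ger0_norm.
apply/eqP; rewrite eq_le; apply/andP; split.
  apply: ge_sup (truncs_neq0 _) _ => _ [r r0 <-].
  rewrite -[r](mulfK tN0) [_ * t]mulrC -mulrA truncZ ?divr_gt0 //.
  by rewrite ler_pM2l //; apply: trunc_seminorm_ge; rewrite divr_gt0.
rewrite -ler_pdivlMl //; apply: ge_sup (truncs_neq0 _) _ => _ [r r0 <-].
by rewrite ler_pdivlMl // -truncZ //; apply: trunc_seminorm_ge; rewrite mulr_gt0.
Qed.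

Lemma trunc_seminorm_functional v : exists phi : E -> R,
  [/\ forall y z, phi (y + z) = phi y + phi z, forall (c : R) y, phi (c *: y) = c * phi y,
      forall y, `|phi y| <= trunc_seminorm w y & phi v = trunc_seminorm w v].
Proof.
have [phi [phiD phiZ phi_le phiv]] := hahn_banach trunc_seminormD trunc_seminormZ v.
exists phi; split=> // y; rewrite ler_norml phi_le andbT lerNl.
by rewrite -mulN1r -phiZ scaleN1r -trunc_seminormN phi_le.
Qed.

End TruncationSeminorm.

Section LimitedlyLwc.
Variables (R : realType) (E : normedModType R) (L : BanachLatticeOn E).
Local Notation "x ≤ y" := (ble L x y) (at level 70, no associativity).
Implicit Types T : E -> E.

Lemma limited_set1 (x : E) : limited_set [set x].
Proof.
split=> [|f [_ fx] eps eps0]; first by exists `|x| => _ ->.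
by have /cvgn0P/(_ _ eps0) [N fN] := fx x; exists N => n nN _ ->; exact: fN.
Qed.

Lemma limitedly_Lwc_elt T x : limitedly_Lwc L T -> Lwc_elt L (T x).
Proof. by move=> /(_ _ (limited_set1 x)); rewrite image_set1. Qed.

(* Choosing [r_n] almost attaining the supremum, the truncations [|z| /\ r_n |x_n|]
   form a disjoint sequence in [sol {z}]. *)
Lemma trunc_seminorm_disjoint_cvg0 z (x : nat -> E) : Lwc_elt L z -> disjoint_seq L x ->
  (fun n => trunc_seminorm L (labs L (x n)) z) @ \oo --> (0 : R).
Proof.
move=> zLwc xdisj; apply/cvgn0P => eps eps0.
have near_sup n : exists r : R, 0 < r /\
    trunc_seminorm L (labs L (x n)) z <= 2 * `|bmeet L (labs L z) (r *: labs L (x n))|.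
  have [->|rhoN0] := eqVneq (trunc_seminorm L (labs L (x n)) z) 0.
    by exists 1; rewrite mulr_ge0.
  have rho2 : 0 < trunc_seminorm L (labs L (x n)) z / 2.
    by rewrite divr_gt0 // lt0r rhoN0 trunc_seminorm_ge0 //; exact: labs_ge0.
  have [_ [r r0 <-] rhor] := sup_adherent rho2 (has_sup_truncs (labs_ge0 L (x n)) z).
  by exists r; split=> //; rewrite -/(trunc_seminorm L _ _) in rhor; lra.
have [r rP] := choice near_sup.
have r_ge0 n : 0 <= r n by exact: ltW (rP n).1.
pose u n := bmeet L (labs L z) (r n *: labs L (x n)).
have u0 n : 0 ≤ u n.
  by apply: bmeet_ge0; [exact: labs_ge0|exact: bscaler_ge0 (r_ge0 n) (labs_ge0 L _)].
have usol n : sol L [set z] (u n) by apply/sol_set1; rewrite bge0_labs //; exact: bmeet_lbl.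
have udisj : disjoint_seq L u.
  apply: (disjoint_seq_le (x := fun n => r n *: labs L (x n))) => [n m nm|n].
    rewrite !labsZ !labs_id !ger0_norm //.
    by apply: bmeet_disjointZ (labs_ge0 L _) (labs_ge0 L _) _ _ (xdisj n m nm).
  by split=> //; rewrite labsZ labs_id ger0_norm //; exact: bmeet_lbr.
have eps2 : 0 < eps / 2 by rewrite divr_gt0.
have /cvgn0P/(_ _ eps2) [N uN] := zLwc u usol udisj.
exists N => n nN; rewrite ger0_norm ?trunc_seminorm_ge0 //; last exact: labs_ge0.
have := uN n nN; rewrite normr_id -/(u n); have := (rP n).2; lra.
Qed.

Lemma Lwc_elt_limitedly_Lwc T : bounded_op T -> (forall x, Lwc_elt L (T x)) ->
  limitedly_Lwc L T.
Proof.
move=> Tb TLwc A [_ Alim] x xsol xdisj.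
have xa n : exists a, A a /\ labs L (x n) ≤ labs L (T a).
  by have [_ [a Aa <-] xa] := xsol n; exists a; split=> //; apply/labs_le.
have [a aP] := choice xa.
pose rho n := trunc_seminorm L (labs L (x n)).
have [phi phiP] := choice (fun n => trunc_seminorm_functional (labs_ge0 L (x n)) (T (a n))).
have phi_le n y : `|phi n y| <= rho n y by case: (phiP n).
pose g n y : R^o := phi n (T y).
have g_null : weakstar_null g.
  have [C C_ge0 TC] := bounded_op_ge0 Tb; have [TD TZ] := Tb.1.
  split=> [n|y].
    have [phiD phiZ _ _] := phiP n.
    split; first by split=> [y z|c y]; rewrite /g ?TD ?phiD ?TZ ?phiZ.
    exists C => y; apply: le_trans (phi_le n _) _.
    by apply: le_trans (trunc_seminorm_le_norm (labs_ge0 L _) _) _; exact: TC.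
  have /cvgn0P rho0 := trunc_seminorm_disjoint_cvg0 (TLwc y) xdisj.
  apply/cvgn0P => eps /rho0 [N rhoN]; exists N => n /rhoN; apply: le_trans.
  exact: le_trans (phi_le n _) (ler_norm _).
apply/cvgn0P => eps eps0; have [N gN] := Alim g g_null eps eps0.
exists N => n nN; rewrite normr_id.
have : `|x n| <= rho n (T (a n)).
  have := trunc_seminorm_ge (labs_ge0 L (x n)) (T (a n)) ltr01.
  by rewrite scale1r bmeetC bmeet_l ?bnorm_labs //; case: (aP n).
move/le_trans; apply; case: (phiP n) => _ _ _ phiv; rewrite /rho -phiv.
exact: le_trans (ler_norm _) (gN n nN (a n) (aP n).1).
Qed.

End LimitedlyLwc.

Section RegularLwcOperators.
Variables (R : realType) (E : normedModType R) (L : BanachLatticeOn E).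
Implicit Types S T U : E -> E.

Definition positive_Lwc_op T :=
  [/\ bounded_op T, positive_op L T & forall x, Lwc_elt L (T x)].

Lemma rlLwcP T : rlLwc L T <->
  exists T1 T2, [/\ positive_Lwc_op T1, positive_Lwc_op T2 & T = (fun x => T1 x - T2 x)].
Proof.
split=> [[T1 [T2 [[T1b T2b] [T1pos T2pos] [T1lim T2lim] ->]]]|].
  by exists T1, T2; split=> //; split=> // x; exact: limitedly_Lwc_elt.
move=> [T1 [T2 [[T1b T1pos T1Lwc] [T2b T2pos T2Lwc] ->]]].
by exists T1, T2; split=> //; split; exact: Lwc_elt_limitedly_Lwc.
Qed.

Lemma rlLwc_Lwc_elt T x : rlLwc L T -> Lwc_elt L (T x).
Proof. by move=> /rlLwcP [T1 [T2 [[_ _ T1Lwc] [_ _ T2Lwc] ->]]]; exact: Lwc_eltB. Qed.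

Lemma positive_Lwc_opD S T : positive_Lwc_op S -> positive_Lwc_op T ->
  positive_Lwc_op (fun x => S x + T x).
Proof.
move=> [Sb Spos SLwc] [Tb Tpos TLwc]; split.
- exact: bounded_opD.
- exact: positive_opD.
- by move=> x; exact: Lwc_eltD.
Qed.

Lemma positive_Lwc_opZ (a : R) T : 0 <= a -> positive_Lwc_op T ->
  positive_Lwc_op (fun x => a *: T x).
Proof.
move=> a0 [Tb Tpos TLwc]; split.
- exact: bounded_opZ.
- exact: positive_opZ.
- by move=> x; exact: Lwc_eltZ.
Qed.

Lemma positive_Lwc_op_comp S T : positive_Lwc_op S -> positive_Lwc_op T ->
  positive_Lwc_op (S \o T).
Proof.
move=> [Sb Spos SLwc] [Tb Tpos _]; split.
- exact: bounded_op_comp.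
- exact: positive_op_comp.
- by move=> x; exact: SLwc.
Qed.

Lemma positive_Lwc_op0 : positive_Lwc_op (fun _ => 0).
Proof. by split; [exact: bounded_op0|exact: positive_op0|move=> _; exact: Lwc_elt0]. Qed.

Lemma rlLwc_regular T : rlLwc L T -> regular_op L T.
Proof. by move=> [T1 [T2 [[T1b T2b] [T1pos T2pos] _ ->]]]; exists T1, T2. Qed.

Lemma rlLwc0 : rlLwc L (fun _ => 0).
Proof.
apply/rlLwcP; exists (fun _ => 0), (fun _ => 0); split; try exact: positive_Lwc_op0.
by apply: funext => x; rewrite subrr.
Qed.

Lemma rlLwcD S T : rlLwc L S -> rlLwc L T -> rlLwc L (fun x => S x + T x).
Proof.
move=> /rlLwcP [S1 [S2 [S1P S2P ->]]] /rlLwcP [T1 [T2 [T1P T2P ->]]].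
apply/rlLwcP; exists (fun x => S1 x + T1 x), (fun x => S2 x + T2 x).
split; try exact: positive_Lwc_opD.
by apply: funext => x; rewrite opprD addrACA.
Qed.

Lemma rlLwcZ (a : R) T : rlLwc L T -> rlLwc L (fun x => a *: T x).
Proof.
move=> /rlLwcP [T1 [T2 [T1P T2P ->]]]; apply/rlLwcP.
have [a0|a0] := leP 0 a.
  exists (fun x => a *: T1 x), (fun x => a *: T2 x).
  split; try exact: positive_Lwc_opZ.
  by apply: funext => x; rewrite scalerBr.
have Na0 : 0 <= - a by rewrite oppr_ge0 ltW.
exists (fun x => (- a) *: T2 x), (fun x => (- a) *: T1 x).
split; try exact: positive_Lwc_opZ.
by apply: funext => x; rewrite scalerBr !scaleNr opprK addrC.
Qed.

Lemma rlLwc_comp S T : rlLwc L S -> rlLwc L T -> rlLwc L (S \o T).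
Proof.
move=> /rlLwcP [S1 [S2 [S1P S2P ->]]] /rlLwcP [T1 [T2 [T1P T2P ->]]].
have [[[S1lin _] _ _] [[S2lin _] _ _]] := (S1P, S2P).
apply/rlLwcP.
exists (fun x => (S1 \o T1) x + (S2 \o T2) x), (fun x => (S1 \o T2) x + (S2 \o T1) x).
split; try by apply: positive_Lwc_opD; exact: positive_Lwc_op_comp.
apply: funext => x /=; rewrite [S1 _]lin_mapB // [S2 _]lin_mapB //.
by rewrite opprB opprD addrACA.
Qed.

Lemma rlLwc_eq_regular :
  (forall T, rlLwc L T <-> regular_op L T) <-> limitedly_Lwc L id.
Proof.
split=> [rlLwc_reg|idLwc T].
  apply: Lwc_elt_limitedly_Lwc; first exact: bounded_op_id.
  have /rlLwc_reg/rlLwcP [T1 [T2 [[_ _ T1Lwc] [_ _ T2Lwc] idE]]] : regular_op L id.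
    exists id, (fun _ => 0); split=> //.
    - exact: bounded_op_id.
    - exact: bounded_op0.
    - exact: positive_op0.
    - by apply: funext => x; rewrite subr0.
  by move=> x; rewrite [x in Lwc_elt _ x](congr1 (@^~ x) idE); exact: Lwc_eltB.
split; first exact: rlLwc_regular.
move=> [T1 [T2 [T1b T2b T1pos T2pos ->]]]; apply/rlLwcP; exists T1, T2.
have idLwc_elt x : Lwc_elt L x := limitedly_Lwc_elt (x := x) idLwc.
by split=> //; split=> // x; exact: idLwc_elt.
Qed.

Lemma rlLwc_dominated T U : positive_Lwc_op U -> bounded_op T -> op_le L T U ->
  (forall x, Lwc_elt L (T x)) -> rlLwc L T.
Proof.
move=> [Ub Upos ULwc] Tb TU TLwc; apply/rlLwcP; exists U, (fun x => U x - T x).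
split=> //; last by apply: funext => x; rewrite opprB addrC subrK.
split=> // [|x]; first exact: bounded_opB.
exact: Lwc_eltB.
Qed.

End RegularLwcOperators.

Section Modulus.
Variables (R : realType) (E : normedModType R) (L : BanachLatticeOn E).
Local Notation "x ≤ y" := (ble L x y) (at level 70, no associativity).
Implicit Types S T M : E -> E.

Lemma regular_op_bounded T : regular_op L T -> bounded_op T.
Proof. by move=> [T1 [T2 [T1b T2b _ _ ->]]]; exact: bounded_opB. Qed.

Lemma modulus_positive T M : op_le L T M -> op_le L (fun x => - T x) M ->
  positive_op L M.
Proof.
move=> TM NTM x x0; apply: bhalf_ge0.
by have := bleD (TM x x0) (NTM x x0); rewrite addr0 opprK addrACA addNr addr0.
Qed.

(* Split [y] as a difference of the positive vectors [|y| + y] and [|y| - y]. *)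
Lemma labs_le_modulus T M y : lin_map T -> lin_map M ->
  op_le L T M -> op_le L (fun x => - T x) M -> labs L (T y) ≤ M (labs L y).
Proof.
move=> Tlin Mlin TM NTM.
pose p := labs L y + y; pose q := labs L y - y.
have p0 : 0 ≤ p by exact: labs_addr_ge0.
have q0 : 0 ≤ q by exact: labs_subr_ge0.
have pBq : p - q = y + y by rewrite /p /q opprB addrA addrAC [labs L y + y]addrC addrK.
have pDq : p + q = labs L y + labs L y by rewrite /p /q addrACA subrr addr0.
have TMp : T p ≤ M p by apply/bsubr_ge0; exact: TM.
have TMq : T q ≤ M q by apply/bsubr_ge0; exact: TM.
have NTMp : - T p ≤ M p by apply/bsubr_ge0; exact: NTM.
have NTMq : - T q ≤ M q by apply/bsubr_ge0; exact: NTM.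
have TE : T y + T y = T p - T q by rewrite -lin_mapB // pBq Tlin.1.
have ME : M (labs L y) + M (labs L y) = M p + M q by rewrite -Mlin.1 -pDq Mlin.1.
apply/labs_le; split; apply: ble_half; rewrite TE.
  rewrite -opprD ME opprD; apply: bleD; first by rewrite -bleN2 opprK.
  by rewrite bleN2.
by rewrite ME; apply: bleD.
Qed.

Lemma rlLwc_le_modulus S T MS MT : regular_op L S -> rlLwc L T ->
  is_op_modulus L S MS -> is_op_modulus L T MT -> op_le L MS MT -> rlLwc L S.
Proof.
move=> Sreg /rlLwcP [T1 [T2 [[T1b T1pos T1Lwc] [T2b T2pos T2Lwc] ->]]]
  [MSreg SMS NSMS _] [_ TMT NTMT MT_least] MS_MT.
have MSb := regular_op_bounded MSreg.
have MSpos : positive_op L MS by exact: modulus_positive SMS NSMS.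
have MT_le : op_le L MT (fun x => T1 x + T2 x).
  apply: MT_least.
  - exists (fun x => T1 x + T2 x), (fun _ => 0); split=> //.
    + exact: bounded_opD.
    + exact: bounded_op0.
    + exact: positive_opD.
    + exact: positive_op0.
    + by apply: funext => x; rewrite subr0.
  - move=> x x0 /=; rewrite opprB addrA addrAC [T1 x + _]addrC addrK.
    by apply: baddr_ge0; exact: T2pos.
  - by move=> x x0 /=; rewrite opprK addrACA subrr addr0; apply: baddr_ge0; exact: T1pos.
have dom x : MS (labs L x) ≤ T1 (labs L x) + T2 (labs L x).
  apply: (ble_trans (y := MT (labs L x))); apply/bsubr_ge0.
    by apply: MS_MT; exact: labs_ge0.
  by apply: MT_le; exact: labs_ge0.
have dom_Lwc x : Lwc_elt L (T1 (labs L x) + T2 (labs L x)) by exact: Lwc_eltD.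
have dom_ge0 x : 0 ≤ T1 (labs L x) + T2 (labs L x).
  by apply: baddr_ge0; [apply: T1pos|apply: T2pos]; exact: labs_ge0.
have MS_Lwc x : Lwc_elt L (MS x).
  apply: Lwc_elt_solid (dom_Lwc x); rewrite (bge0_labs (dom_ge0 x)).
  exact: ble_trans (positive_op_labs _ MSb.1 MSpos) (dom x).
apply: (rlLwc_dominated (U := MS)) => //; first exact: regular_op_bounded.
move=> x; apply: Lwc_elt_solid (dom_Lwc x); rewrite (bge0_labs (dom_ge0 x)).
apply: ble_trans (dom x); apply: labs_le_modulus => //.
  exact: (regular_op_bounded Sreg).1.
exact: MSb.1.
Qed.

End Modulus.

Section PositivePart.
Variables (R : realType) (E : normedModType R) (L : BanachLatticeOn E).
Local Notation "x ≤ y" := (ble L x y) (at level 70, no associativity).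
Hypothesis Edc : dedekind_complete L.
Variables T P Q : E -> E.
Hypotheses (Pb : bounded_op P) (Qb : bounded_op Q).
Hypotheses (Ppos : positive_op L P) (Qpos : positive_op L Q).
Hypothesis TE : T = fun x => P x - Q x.
Implicit Types u v x y : E.

Let Tb : bounded_op T. Proof. by rewrite TE; exact: bounded_opB. Qed.
Let Tlin : lin_map T. Proof. exact: Tb.1. Qed.

Lemma T_le_interval U : lin_map U -> positive_op L U -> op_le L T U ->
  forall u y, 0 ≤ y -> y ≤ u -> T y ≤ U u.
Proof.
move=> Ulin Upos TU u y y0 yu; apply: ble_trans (positive_op_le Ulin Upos yu).
by apply/bsubr_ge0; exact: TU.
Qed.

Lemma op_le_T_P : op_le L T P.
Proof. by move=> x x0; rewrite TE opprB addrC subrK; exact: Qpos. Qed.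

Definition is_sup_T_on u s := (forall y, 0 ≤ y -> y ≤ u -> T y ≤ s) /\
  (forall z, (forall y, 0 ≤ y -> y ≤ u -> T y ≤ z) -> s ≤ z).

Let sup_T_on_exists u : exists s, 0 ≤ u -> is_sup_T_on u s.
Proof.
have [u0|Nu0] := pselect (0 ≤ u); last by exists 0 => /Nu0.
set Tu := T @` [set y | 0 ≤ y /\ y ≤ u].
have Tu_neq0 : Tu !=set0 by exists (T 0); exists 0 => //; split=> //; exact: ble_refl.
have Tu_ub : exists w, forall a, Tu a -> a ≤ w.
  exists (P u) => _ [y [y0 yu] <-].
  exact: T_le_interval Pb.1 Ppos op_le_T_P _ _ y0 yu.
have [s [sub sleast]] := Edc Tu_neq0 Tu_ub.
exists s => _; split=> [y y0 yu|z zub]; first by apply: sub; exists y.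
by apply: sleast => _ [y [y0 yu] <-]; exact: zub.
Qed.

(* The Riesz-Kantorovich formula [T^+ u = sup {T y | 0 <= y <= u}] on the positive
   cone; [Tplus] below extends it through [x = (|x| + x) - |x|]. *)
Definition Tplus_cone u : E := projT1 (choice sup_T_on_exists) u.

Lemma Tplus_coneP u : 0 ≤ u -> is_sup_T_on u (Tplus_cone u).
Proof. exact: (projT2 (choice sup_T_on_exists) u). Qed.

Lemma Tplus_cone_ub u y : 0 ≤ y -> y ≤ u -> T y ≤ Tplus_cone u.
Proof. by move=> y0 yu; apply: (Tplus_coneP (ble_trans y0 yu)).1. Qed.

Lemma Tplus_cone_least u z : 0 ≤ u ->
  (forall y, 0 ≤ y -> y ≤ u -> T y ≤ z) -> Tplus_cone u ≤ z.
Proof. by move=> u0; apply: (Tplus_coneP u0).2. Qed.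

Lemma Tplus_cone_le U u : lin_map U -> positive_op L U -> op_le L T U -> 0 ≤ u ->
  Tplus_cone u ≤ U u.
Proof. by move=> Ulin Upos TU u0; apply: Tplus_cone_least => // y; exact: T_le_interval. Qed.

Lemma Tplus_cone_ge0 u : 0 ≤ u -> 0 ≤ Tplus_cone u.
Proof. by move=> u0; have := Tplus_cone_ub (ble_refl L 0) u0; rewrite lin_map0. Qed.

Lemma Tplus_coneD u v : 0 ≤ u -> 0 ≤ v -> Tplus_cone (u + v) = Tplus_cone u + Tplus_cone v.
Proof.
move=> u0 v0; have uv0 := baddr_ge0 u0 v0; apply: ble_antisym.
  apply: Tplus_cone_least => // y y0 yuv.
  have [yv0 yv yv_v] := riesz_decomposition y0 u0 v0 yuv.
  rewrite -(subrK (bmeet L y u) y) addrC Tlin.1; apply: bleD.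
    by apply: Tplus_cone_ub; [exact: bmeet_ge0|exact: bmeet_lbr].
  exact: Tplus_cone_ub.
rewrite -ble_subr_addr; apply: Tplus_cone_least => // y1 y10 y1u.
rewrite ble_subr_addr addrC -ble_subr_addr; apply: Tplus_cone_least => // y2 y20 y2v.
by rewrite ble_subr_addr addrC -Tlin.1; apply: Tplus_cone_ub; [exact: baddr_ge0|exact: bleD].
Qed.

Lemma Tplus_coneZ (t : R) u : 0 <= t -> 0 ≤ u -> Tplus_cone (t *: u) = t *: Tplus_cone u.
Proof.
move=> t0 u0; have [->|tN0] := eqVneq t 0.
  rewrite !scale0r; apply: ble_antisym; last exact: Tplus_cone_ge0 (ble_refl L 0).
  apply: Tplus_cone_least; first exact: ble_refl.
  by move=> y y0 y1; rewrite (ble_antisym y1 y0) lin_map0 //; exact: ble_refl.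
have ti : 0 <= t^-1 by rewrite invr_ge0.
have scaleK (y : E) : t *: (t^-1 *: y) = y by rewrite scalerA mulfV ?scale1r.
have scaleVK (y : E) : t^-1 *: (t *: y) = y by rewrite scalerA mulVf ?scale1r.
apply: ble_antisym.
  apply: Tplus_cone_least; first exact: bscaler_ge0.
  move=> y y0 y1; rewrite -(scaleK y) Tlin.2; apply: ble_scale => //.
  by apply: Tplus_cone_ub; [exact: bscaler_ge0|rewrite -(scaleVK u); exact: ble_scale].
rewrite -[Tplus_cone (t *: u)]scaleK; apply: ble_scale => //.
apply: Tplus_cone_least => // y y0 y1.
rewrite -(scaleVK y) Tlin.2; apply: ble_scale => //.
by apply: Tplus_cone_ub; [exact: bscaler_ge0|exact: ble_scale].
Qed.

Lemma Tplus_cone0 : Tplus_cone 0 = 0.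
Proof. by have := Tplus_coneZ (ler0n R 0) (ble_refl L 0); rewrite !scale0r. Qed.

Definition Tplus x := Tplus_cone (labs L x + x) - Tplus_cone (labs L x).

Lemma TplusB u v : 0 ≤ u -> 0 ≤ v -> Tplus (u - v) = Tplus_cone u - Tplus_cone v.
Proof.
move=> u0 v0; have x0 := labs_ge0 L (u - v); have xx0 := labs_addr_ge0 L (u - v).
rewrite /Tplus; set a := Tplus_cone (_ + _); set c := Tplus_cone (labs L _).
have -> : a = c + Tplus_cone u - Tplus_cone v.
  by rewrite -[a](addrK (Tplus_cone v)) /a -Tplus_coneD // -addrA subrK Tplus_coneD.
by rewrite addrAC [c + _]addrC addrK.
Qed.

Lemma Tplus_cone_eq u : 0 ≤ u -> Tplus u = Tplus_cone u.
Proof. by move=> u0; rewrite -[u]subr0 TplusB ?Tplus_cone0 ?subr0 //; exact: ble_refl. Qed.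

Lemma Tplus_lin : lin_map Tplus.
Proof.
split=> [x y|a x].
  have x0 := labs_ge0 L x; have xx0 := labs_addr_ge0 L x.
  have y0 := labs_ge0 L y; have yy0 := labs_addr_ge0 L y.
  have -> : x + y = ((labs L x + x) + (labs L y + y)) - (labs L x + labs L y).
    by rewrite addrACA [labs L x + labs L y + _]addrC addrK.
  rewrite TplusB ?(Tplus_coneD xx0 yy0) ?(Tplus_coneD x0 y0); try exact: baddr_ge0.
  by rewrite /Tplus opprD addrACA.
have x0 := labs_ge0 L x; have xx0 := labs_addr_ge0 L x.
have [a0|a0] := leP 0 a.
  have -> : a *: x = a *: (labs L x + x) - a *: labs L x.
    by rewrite -scalerBr [labs L x + x]addrC addrK.
  by rewrite TplusB ?Tplus_coneZ -?scalerBr //; exact: bscaler_ge0.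
have Na0 : 0 <= - a by rewrite oppr_ge0 ltW.
have -> : a *: x = (- a) *: labs L x - (- a) *: (labs L x + x).
  by rewrite -scalerBr opprD addNKr scaleNr scalerN opprK.
rewrite TplusB ?Tplus_coneZ //; try exact: bscaler_ge0.
by rewrite -scalerBr scaleNr -scalerN opprB.
Qed.

Lemma Tplus_positive : positive_op L Tplus.
Proof. by move=> x x0; rewrite Tplus_cone_eq //; exact: Tplus_cone_ge0. Qed.

Lemma op_le_T_Tplus : op_le L T Tplus.
Proof.
move=> x x0; rewrite Tplus_cone_eq // bsubr_ge0.
by apply: Tplus_cone_ub => //; exact: ble_refl.
Qed.

Lemma Tplus_bounded : bounded_op Tplus.
Proof.
split; first exact: Tplus_lin.
have [C C0 PC] := bounded_op_ge0 Pb.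
have Tplus_cone_norm u : 0 ≤ u -> `|Tplus_cone u| <= C * `|u|.
  move=> u0; apply: le_trans (PC u).
  exact: bnorm_le (Tplus_cone_ge0 u0) (Tplus_cone_le Pb.1 Ppos op_le_T_P u0).
exists (C + C + C) => x; apply: le_trans (ler_normB _ _) _.
have := Tplus_cone_norm _ (labs_addr_ge0 L x); have := Tplus_cone_norm _ (labs_ge0 L x).
have := ler_normD (labs L x) x; rewrite bnorm_labs.
by have := normr_ge0 x; nra.
Qed.

End PositivePart.

Section Closedness.
Variables (R : realType) (E : normedModType R) (L : BanachLatticeOn E).
Local Notation "x ≤ y" := (ble L x y) (at level 70, no associativity).
Variables (Tn : nat -> E -> E) (T : E -> E) (M : nat -> E -> E).
Hypotheses (TnLwc : forall n, rlLwc L (Tn n)) (Treg : regular_op L T).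
Hypothesis Mmod : forall n, is_op_modulus L (fun x => Tn n x - T x) (M n).
Hypothesis Mcvg : (fun n => op_norm (M n)) @ \oo --> (0 : R).

Let Tb : bounded_op T. Proof. exact: regular_op_bounded Treg. Qed.
Let Tnb n : bounded_op (Tn n). Proof. exact: regular_op_bounded (rlLwc_regular (TnLwc n)). Qed.
Let Mb n : bounded_op (M n). Proof. by case: (Mmod n) => /regular_op_bounded. Qed.
Let Mpos n : positive_op L (M n).
Proof. by case: (Mmod n) => _ TM NTM _; exact: modulus_positive TM NTM. Qed.

Lemma modulus_small x (d : R) : 0 < d -> exists n, `|M n x| <= d.
Proof.
move=> d0; have x1 : 0 < `|x| + 1 by rewrite ltr_pwDr ?normr_ge0.
have /cvgn0P/(_ _ (divr_gt0 d0 x1)) [N MN] := Mcvg.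
exists N; apply: le_trans (op_norm_le _ (Mb N)) _.
have MN_le : op_norm (M N) <= d / (`|x| + 1) := le_trans (ler_norm _) (MN N (leqnn N)).
apply: le_trans (ler_wpM2r (normr_ge0 x) MN_le) _.
by rewrite mulrAC ler_pdivrMr // ler_pM2l // lerDl.
Qed.

Lemma Lwc_elt_limit x : Lwc_elt L (T x).
Proof.
apply: Lwc_elt_approx => d d0; have [n Mn] := modulus_small (labs L x) d0.
exists (Tn n x), (M n (labs L x)); split=> //; first exact: rlLwc_Lwc_elt.
have -> : T x = Tn n x - (Tn n x - T x) by rewrite opprB addrC subrK.
apply: ble_trans (labsD _ _ _) _; apply: bleD; first exact: ble_refl.
rewrite labsN (bge0_labs (Mpos n (labs_ge0 L x))).
have [_ TM NTM _] := Mmod n.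
exact: labs_le_modulus (bounded_opB (Tnb n) Tb).1 (Mb n).1 TM NTM.
Qed.

Section LimitPositivePart.
Hypothesis Edc : dedekind_complete L.
Variables P Q : E -> E.
Hypotheses (Pb : bounded_op P) (Qb : bounded_op Q).
Hypotheses (Ppos : positive_op L P) (Qpos : positive_op L Q).
Hypothesis TE : T = fun x => P x - Q x.

Lemma Lwc_elt_limit_Tplus_cone u : 0 ≤ u -> Lwc_elt L (Tplus_cone Edc Pb Ppos Qpos TE u).
Proof.
move=> u0; apply: Lwc_elt_approx => d d0; have [n Mn] := modulus_small u d0.
have /rlLwcP [A [B [[Ab Apos ALwc] [Bb Bpos _] TnE]]] := TnLwc n.
exists (A u), (M n u); split=> //.
have T_le : op_le L T (fun x => A x + M n x).
  move=> y y0; apply/bsubr_ge0; have [_ _ NTM _] := Mmod n.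
  have TnyE : Tn n y = A y - B y by rewrite TnE.
  have -> : T y = Tn n y - (Tn n y - T y) by rewrite opprB addrC subrK.
  rewrite {1}TnyE; apply: bleD; last by apply/bsubr_ge0; exact: NTM.
  by rewrite -bsubr_ge0 opprB addrC subrK; exact: Bpos.
rewrite (bge0_labs (Apos _ u0)) (bge0_labs (Mpos n u0)) bge0_labs; last exact: Tplus_cone_ge0.
apply: (Tplus_cone_le Edc Pb Ppos Qpos TE (U := fun x => A x + M n x)) => //.
  exact: (bounded_opD Ab (Mb n)).1.
exact: positive_opD.
Qed.

End LimitPositivePart.

Lemma rlLwc_limit : dedekind_complete L -> rlLwc L T.
Proof.
move=> Edc; have [P [Q [Pb Qb Ppos Qpos TE]]] := Treg.
pose Tp := Tplus Edc Pb Ppos Qpos TE.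
have coneLwc u : 0 ≤ u -> Lwc_elt L (Tplus_cone Edc Pb Ppos Qpos TE u).
  by move=> u0; apply: Lwc_elt_limit_Tplus_cone.
have TpLwc x : Lwc_elt L (Tp x).
  by apply: Lwc_eltB; apply: coneLwc; [exact: labs_addr_ge0|exact: labs_ge0].
apply: (rlLwc_dominated (U := Tp)) => //.
- by split=> //; [exact: Tplus_bounded|exact: Tplus_positive].
- exact: op_le_T_Tplus.
- exact: Lwc_elt_limit.
Qed.

End Closedness.

Theorem theorem3p7 (R : realType) (E : completeNormedModType R)
    (L : BanachLatticeOn E) :
  (* (i) r-l-Lwc(E) is a subalgebra of L_r(E) *)
  ( (forall T, rlLwc L T -> regular_op L T)
    /\ rlLwc L (fun _ => 0)
    /\ (forall S T, rlLwc L S -> rlLwc L T -> rlLwc L (fun x => S x + T x))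
    /\ (forall (a : R) T, rlLwc L T -> rlLwc L (fun x => a *: T x))
    /\ (forall S T, rlLwc L S -> rlLwc L T -> rlLwc L (S \o T)) )
  /\ ( (forall T, rlLwc L T <-> regular_op L T) <-> limitedly_Lwc L id )
  (* (ii) for Dedekind complete E: closed order ideal of (L_r(E), ||.||_r) *)
  /\ ( dedekind_complete L ->
       (forall S T MS MT, regular_op L S -> rlLwc L T ->
          is_op_modulus L S MS -> is_op_modulus L T MT -> op_le L MS MT ->
          rlLwc L S)
       /\ (forall (Tn : nat -> E -> E) (T : E -> E) (Mn : nat -> E -> E),
          (forall n, rlLwc L (Tn n)) -> regular_op L T ->
          (forall n, is_op_modulus L (fun x => Tn n x - T x) (Mn n)) ->
          (fun n => op_norm (Mn n)) @ \oo --> (0 : R) ->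
          rlLwc L T) ).
Proof.
split.
  split; first exact: rlLwc_regular.
  split; first exact: rlLwc0.
  split; first exact: rlLwcD.
  by split; [exact: rlLwcZ|exact: rlLwc_comp].
split; first exact: rlLwc_eq_regular.
move=> Edc; split; first exact: rlLwc_le_modulus.
by move=> Tn T M TnLwc Treg Mmod Mcvg; exact: rlLwc_limit Edc.
Qed.
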